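(* Let $(B,\lfloor\cdot,\cdot\rfloor)$ be an SSD space with quadratic form $q$, and let $f:B\to\mathbb{R}\cup\{+\infty\}$ be a minimal element (with respect to the pointwise order) of the set of convex functions $g:B\to\mathbb{R}\cup\{+\infty\}$ satisfying $g\ge q$ on $B$. Then $f^{@}\ge f$ on $B$.
   Context: An SSD space is a pair $(B,\lfloor\cdot,\cdot\rfloor)$ with $B$ a nonzero real vector space and $\lfloor\cdot,\cdot\rfloor$ a symmetric bilinear form; $q(b)=\frac12\lfloor b,b\rfloor$. For $f:B\to\mathbb{R}\cup\{+\infty\}$, $f^{@}(b)=\sup_{c\in B}\{\lfloor c,b\rfloor-f(c)\}$. *)

From HB Require Import structures.
From mathcomp Require Import all_boot all_order all_algebra.
From mathcomp Require Import all_classical all_reals ereal.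
Set Implicit Arguments. Unset Strict Implicit. Unset Printing Implicit Defensive.
Import Order.TTheory GRing.Theory Num.Theory.
Local Open Scope ring_scope.

Definition sym_bilinear (R : realType) (B : lmodType R) (bf : B -> B -> R) : Prop :=
  (forall a b : B, bf a b = bf b a) /\
  (forall a b c : B, bf (a + b)%R c = (bf a c + bf b c)%R) /\
  (forall (r : R) (a b : B), bf (r *: a)%R b = (r * bf a b)%R).

Definition SSD_space (R : realType) (B : lmodType R) (bf : B -> B -> R) : Prop :=
  (exists b : B, b != 0) /\ sym_bilinear bf.

Definition qform (R : realType) (B : lmodType R) (bf : B -> B -> R) (b : B) : R :=
  (bf b b / 2)%R.

(* g : B -> R ∪ {+oo} (never -oo) *)
Definition no_minfty (R : realType) (B : lmodType R) (g : B -> \bar R) : Prop :=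
  forall b, g b != -oo%E.

Definition econvex (R : realType) (B : lmodType R) (g : B -> \bar R) : Prop :=
  forall (x y : B) (t : R), (0 < t)%R -> (t < 1)%R ->
    (g (t *: x + (1 - t) *: y)%R <= t%:E * g x + (1 - t)%R%:E * g y)%E.

Definition convex_above_q (R : realType) (B : lmodType R) (bf : B -> B -> R)
  (g : B -> \bar R) : Prop :=
  no_minfty g /\ econvex g /\ (forall b, ((qform bf b)%:E <= g b)%E).

Definition minimal_convex_above_q (R : realType) (B : lmodType R) (bf : B -> B -> R)
  (f : B -> \bar R) : Prop :=
  convex_above_q bf f /\
  (forall g, convex_above_q bf g -> (forall b, (g b <= f b)%E) -> g = f).

Definition fat (R : realType) (B : lmodType R) (bf : B -> B -> R)
  (f : B -> \bar R) (b : B) : \bar R :=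
  ereal_sup [set ((bf c b)%:E - f c)%E | c in [set: B]].

(* Suppose f^@(b) < f(b) and pick a real a with f^@(b) <= a, q(b) <= a and
   a < f(b).  The convex hull g of f and the point (b, a) is convex, lies below
   f and takes a value <= a < f(b) at b.  It still majorizes q: on the segment
   from (d, r), r >= f(d), to (b, a) one has
     l r + (1 - l) a - q(l d + (1 - l) b)
       = l^2 (r - q d) + l (1 - l) (r + a - [d, b]) + (1 - l)^2 (a - q b),
   and all three brackets are nonnegative, the middle one because
   [d, b] - f(d) <= f^@(b) <= a.  This contradicts the minimality of f. *)
From mathcomp Require Import all_boot all_order all_algebra.
From mathcomp Require Import all_classical all_reals ereal.
From mathcomp Require Import ring lra.
Set Implicit Arguments. Unset Strict Implicit. Unset Printing Implicit Defensive.
Import Order.TTheory GRing.Theory Num.Theory.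
Local Open Scope ring_scope.

Section QuadraticForm.
Variables (R : realType) (B : lmodType R) (bf : B -> B -> R).
Hypothesis bf_sym : sym_bilinear bf.

Lemma qform_segment (l : R) (d b : B) :
  qform bf (l *: d + (1 - l) *: b) =
  l ^+ 2 * qform bf d + l * (1 - l) * bf d b + (1 - l) ^+ 2 * qform bf b.
Proof.
case: bf_sym => [sym [add scal]].
have lin z : bf (l *: d + (1 - l) *: b) z = l * bf d z + (1 - l) * bf b z.
  by rewrite add !scal.
have linr z : bf z (l *: d + (1 - l) *: b) = l * bf z d + (1 - l) * bf z b.
  by rewrite sym lin (sym d) (sym b).
by rewrite /qform lin !linr (sym b d); field.
Qed.

Lemma qform_segment_le (l r a : R) (d b : B) :
  0 <= l <= 1 -> qform bf d <= r -> bf d b - r <= a -> qform bf b <= a ->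
  qform bf (l *: d + (1 - l) *: b) <= l * r + (1 - l) * a.
Proof.
move=> /andP[l0 l1] qd db qb; rewrite qform_segment.
have d_part : 0 <= l ^+ 2 * (r - qform bf d) by rewrite mulr_ge0 ?sqr_ge0 ?subr_ge0.
have db_part : 0 <= l * (1 - l) * (r + a - bf d b).
  by rewrite !mulr_ge0 ?subr_ge0 //; lra.
have b_part : 0 <= (1 - l) ^+ 2 * (a - qform bf b).
  by rewrite mulr_ge0 ?sqr_ge0 ?subr_ge0.
rewrite -subr_ge0.
suff -> : l * r + (1 - l) * a - (l ^+ 2 * qform bf d + l * (1 - l) * bf d b
    + (1 - l) ^+ 2 * qform bf b) = l ^+ 2 * (r - qform bf d)
    + l * (1 - l) * (r + a - bf d b) + (1 - l) ^+ 2 * (a - qform bf b).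
  by rewrite !addr_ge0.
ring.
Qed.

End QuadraticForm.

Local Open Scope ereal_scope.

Section InfimumOfConvexFamily.
Variables (R : realType) (B : lmodType R) (S : B -> set R).

Definition einf_fam (c : B) : \bar R := ereal_inf (EFin @` S c).

Hypothesis S_convex : forall (x y : B) (t v w : R), (0 < t)%R -> (t < 1)%R ->
  S x v -> S y w -> S (t *: x + (1 - t) *: y)%R (t * v + (1 - t) * w)%R.

Lemma einf_fam_lt (c : B) (a : R) :
  einf_fam c < a%:E -> exists2 v, S c v & (v < a)%R.
Proof. by case/ereal_inf_lt => _ [v Sv <-]; rewrite lte_fin; exists v. Qed.

Lemma econvex_einf_fam : no_minfty einf_fam -> econvex einf_fam.
Proof.
move=> nm x y t t0 t1; have t1' : (0 < 1 - t)%R by rewrite subr_gt0.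
have mulpy (s : R) : (0 < s)%R -> s%:E * +oo = +oo.
  by move=> s0; rewrite muleC gt0_mulye ?lte_fin.
case Ex: (einf_fam x) (nm x) => [a| |] // _; last first.
  rewrite mulpy // addye ?leey //.
  by case: (einf_fam y) (nm y) => [r| |] //= _; rewrite mulpy.
case Ey: (einf_fam y) (nm y) => [a'| |] // _; last by rewrite mulpy // addey ?leey.
apply/lee_addgt0Pr => e e0.
have [v Sv vlt] : exists2 v, S x v & (v < a + e)%R.
  by apply: einf_fam_lt; rewrite Ex lte_fin ltrDl.
have [w Sw wlt] : exists2 w, S y w & (w < a' + e)%R.
  by apply: einf_fam_lt; rewrite Ey lte_fin ltrDl.
apply: le_trans (_ : (t * v + (1 - t) * w)%:E <= _).
  by apply: ereal_inf_lbound; exists (t * v + (1 - t) * w)%R => //; exact: S_convex.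
rewrite -!EFinM -!EFinD lee_fin.
have : (t * v <= t * (a + e))%R by rewrite ler_pM2l // ltW.
have : ((1 - t) * w <= (1 - t) * (a' + e))%R by rewrite ler_pM2l // ltW.
lra.
Qed.

End InfimumOfConvexFamily.

Lemma scale_segments_merge (R : realType) (B : lmodType R) (t l1 l2 s : R)
    (d1 d2 b : B) (mu := (t * l1 + (1 - t) * l2)%R) :
  (mu * s = t * l1)%R ->
  (t *: (l1 *: d1 + (1 - l1) *: b) + (1 - t) *: (l2 *: d2 + (1 - l2) *: b) =
   mu *: (s *: d1 + (1 - s) *: d2) + (1 - mu) *: b)%R.
Proof.
move=> ms1; have ms2 : (mu * (1 - s) = (1 - t) * l2)%R.
  by rewrite mulrBr mulr1 ms1 /mu; ring.
rewrite !scalerDr !scalerA ms1 ms2 addrACA -scalerDl.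
by congr (_ + _ *: b)%R; rewrite /mu; ring.
Qed.

Section HullWithPoint.
Variables (R : realType) (B : lmodType R) (f : B -> \bar R) (b : B) (a : R).

(* Values at [c] of the convex hull of the epigraph of [f] and the point
   [(b, a)]; the disjunct [l = 0] admits the point itself, whatever [f d]. *)
Definition hull_point_set (c : B) : set R :=
  [set v | exists l d r, [/\ (0 <= l <= 1)%R, l = 0%R \/ f d <= r%:E,
     c = (l *: d + (1 - l) *: b)%R & v = (l * r + (1 - l) * a)%R]].

Definition hull_point : B -> \bar R := einf_fam hull_point_set.

Lemma hull_point_set_toward_point (u w : R) (y : B) : (0 <= u <= 1)%R ->
  hull_point_set y w ->
  hull_point_set (u *: y + (1 - u) *: b)%R (u * w + (1 - u) * a)%R.
Proof.
move=> /andP[u0 u1] [l [d [r [/andP[l0 l1] hd -> ->]]]].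
exists (u * l)%R, d, r; split.
- by rewrite mulr_ge0 //= mulr_ile1.
- by case: hd => [->|]; [left; rewrite mulr0 | right].
- rewrite scalerDr !scalerA -addrA; congr (_ + _)%R.
  by rewrite -scalerDl; congr (_ *: b)%R; ring.
- ring.
Qed.

Lemma hull_point_set_mix (t l1 l2 r1 r2 : R) (d1 d2 : B) :
  econvex f -> (0 < t < 1)%R -> (0 < l1 <= 1)%R -> (0 < l2 <= 1)%R ->
  f d1 <= r1%:E -> f d2 <= r2%:E ->
  hull_point_set
    (t *: (l1 *: d1 + (1 - l1) *: b) + (1 - t) *: (l2 *: d2 + (1 - l2) *: b))%R
    (t * (l1 * r1 + (1 - l1) * a) + (1 - t) * (l2 * r2 + (1 - l2) * a))%R.
Proof.
move=> fconv /andP[t0 t1] /andP[l10 l11] /andP[l20 l21] hd1 hd2.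
set mu := (t * l1 + (1 - t) * l2)%R.
have mu0 : (0 < mu)%R by rewrite addr_gt0 ?mulr_gt0 ?subr_gt0.
set s := (t * l1 / mu)%R.
have ms1 : (mu * s = t * l1)%R by rewrite /s mulrCA mulfV ?mulr1 ?gt_eqF.
have ms2 : (mu * (1 - s) = (1 - t) * l2)%R by rewrite mulrBr mulr1 ms1 /mu; ring.
have s0 : (0 < s)%R by rewrite divr_gt0 ?mulr_gt0.
have s1 : (s < 1)%R.
  by rewrite -subr_gt0 -(pmulr_rgt0 _ mu0) ms2 mulr_gt0 ?subr_gt0.
exists mu, (s *: d1 + (1 - s) *: d2)%R, (s * r1 + (1 - s) * r2)%R; split.
- rewrite ltW //= /mu.
  have : (t * l1 <= t)%R by rewrite ler_piMr // ltW.
  have : ((1 - t) * l2 <= 1 - t)%R by rewrite ler_piMr // subr_ge0 ltW.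
  lra.
- right; apply: le_trans (fconv _ _ _ s0 s1) _.
  rewrite (EFinD (s * r1)%R) (EFinM s) (EFinM (1 - s)%R).
  by apply: leeD; rewrite lee_pmul2l ?lte_fin ?subr_gt0.
- exact: scale_segments_merge.
- have -> : (mu * (s * r1 + (1 - s) * r2) = t * l1 * r1 + (1 - t) * l2 * r2)%R.
    by rewrite mulrDr (mulrA mu s) (mulrA mu (1 - s)%R) ms1 ms2.
  by rewrite /mu; ring.
Qed.

Lemma hull_point_set_convex (x y : B) (t v w : R) :
  econvex f -> (0 < t)%R -> (t < 1)%R ->
  hull_point_set x v -> hull_point_set y w ->
  hull_point_set (t *: x + (1 - t) *: y)%R (t * v + (1 - t) * w)%R.
Proof.
move=> fconv t0 t1 hx hy.
have t01 : (0 <= t <= 1)%R by rewrite !ltW.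
have [l1 [d1 [r1 [/andP[l10 l11] hd1 ex ev]]]] := hx.
have [l2 [d2 [r2 [/andP[l20 l21] hd2 ey ew]]]] := hy.
have [l1_0|l1n0] := eqVneq l1 0%R.
  move: ex ev; rewrite l1_0 scale0r add0r subr0 scale1r mul0r add0r mul1r => -> ->.
  rewrite (addrC (t *: b)%R) (addrC (t * a)%R).
  have := @hull_point_set_toward_point (1 - t)%R w y; rewrite subKr.
  by apply=> //; rewrite subr_ge0 gerBl !ltW.
have [l2_0|l2n0] := eqVneq l2 0%R.
  move: ey ew; rewrite l2_0 scale0r add0r subr0 scale1r mul0r add0r mul1r => -> ->.
  exact: hull_point_set_toward_point.
case: hd1 => [/eqP|hd1]; first by rewrite (negbTE l1n0).
case: hd2 => [/eqP|hd2]; first by rewrite (negbTE l2n0).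
rewrite ex ev ey ew; apply: hull_point_set_mix; rewrite ?t0 ?t1 //.
- by rewrite lt_def l1n0 l10.
- by rewrite lt_def l2n0 l20.
Qed.

Lemma hull_point_le (c : B) : f c != -oo -> hull_point c <= f c.
Proof.
case fc: (f c) => [r| |] // _; last exact: leey.
apply: ereal_inf_lbound; exists r => //; exists 1%R, c, r; split.
- by rewrite ler01 lexx.
- by right; rewrite fc.
- by rewrite subrr scale0r addr0 scale1r.
- by rewrite subrr mul0r addr0 mul1r.
Qed.

Lemma hull_point_at : hull_point b <= a%:E.
Proof.
apply: ereal_inf_lbound; exists a => //; exists 0%R, b, 0%R; split.
- by rewrite lexx ler01.
- by left.
- by rewrite scale0r add0r subr0 scale1r.
- by rewrite mul0r add0r subr0 mul1r.
Qed.

Lemma hull_point_convex : econvex f -> no_minfty hull_point -> econvex hull_point.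
Proof. by move=> fconv; apply: econvex_einf_fam => *; exact: hull_point_set_convex. Qed.

Lemma hull_point_ge_qform (bf : B -> B -> R) : sym_bilinear bf ->
  (forall c, (qform bf c)%:E <= f c) -> (qform bf b <= a)%R ->
  (forall d, (bf d b)%:E - f d <= a%:E) ->
  forall c, (qform bf c)%:E <= hull_point c.
Proof.
move=> bf_sym f_q q_a fat_a c; apply/ereal_infP => _ [_ [l [d [r [l01 hd -> ->]]]] <-].
rewrite lee_fin; case: hd => [->|fd_r].
  by rewrite scale0r add0r subr0 scale1r mul0r add0r mul1r.
apply: qform_segment_le => //; first by rewrite -lee_fin (le_trans (f_q d)).
by rewrite -lee_fin EFinB (le_trans _ (fat_a d)) // leeB.
Qed.

End HullWithPoint.

Lemma fat_ubound (R : realType) (B : lmodType R) (bf : B -> B -> R)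
    (f : B -> \bar R) (b c : B) :
  (bf c b)%:E - f c <= fat bf f b.
Proof. by apply: ereal_sup_ubound; exists c. Qed.

(* At a point where [f] touches [q], [f^@ >= [b, b] - q b = q b]. *)
Lemma qform_lt_of_fat_lt (R : realType) (B : lmodType R) (bf : B -> B -> R)
    (f : B -> \bar R) (b : B) :
  (qform bf b)%:E <= f b -> fat bf f b < f b -> (qform bf b)%:E < f b.
Proof.
move=> q_f fat_lt; rewrite lt_neqAle q_f andbT.
apply: contraTneq fat_lt => q_fb; rewrite -leNgt -q_fb.
by apply: le_trans (fat_ubound bf f b b); rewrite -q_fb -EFinB lee_fin /qform; lra.
Qed.

Lemma exists_real_between (R : realType) (x z : \bar R) (y : R) :
  x < z -> y%:E < z -> exists a : R, [/\ x <= a%:E, (y <= a)%R & a%:E < z].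
Proof.
case: x => [r| |] xz yz.
- have [ry|yr] := leP r y; first by exists y; rewrite lee_fin ry lexx.
  by exists r; rewrite lexx ltW.
- by rewrite ltNge leey in xz.
- by exists y; rewrite leNye lexx.
Qed.

Theorem mainTheorem13 (R : realType) (B : lmodType R) (bf : B -> B -> R)
  (f : B -> \bar R) :
  SSD_space bf -> minimal_convex_above_q bf f ->
  forall b : B, (f b <= fat bf f b)%E.
Proof.
move=> [_ bf_sym] [[f_nm [f_conv f_q]] f_min] b.
rewrite leNgt; apply/negP => fat_lt.
have q_lt := qform_lt_of_fat_lt (f_q b) fat_lt.
have [a [fat_a q_a a_lt]] := exists_real_between fat_lt q_lt.
have g_q := hull_point_ge_qform bf_sym f_q q_a
  (fun d => le_trans (fat_ubound bf f b d) fat_a).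
have g_nm : no_minfty (hull_point f b a).
  by move=> c; rewrite -leeNy_eq -ltNge (lt_le_trans (ltNyr _) (g_q c)).
have g_f : hull_point f b a = f.
  apply: f_min; last by move=> c; exact: hull_point_le.
  by split; [|split; first exact: hull_point_convex].
have := hull_point_at f b a; rewrite g_f => fb_a.
by have := lt_le_trans a_lt fb_a; rewrite ltxx.
Qed.
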